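(* Let $\{\eta_n\}_{n\ge1}$ be nonzero complex numbers with $|\eta_n|$ nondecreasing, such that there exist $N,C>0$ with $|\eta_n|\ge Cn^2$ for $n\ge N$. Let $D_n$, $n=0,1,2,\dots$, be open discs of radius $R>0$ centred at $c_n$, with $c_0=0$ and $|\eta_n-c_n|\le R/2$ for $n\ge1$, and assume there is $\tilde N$ such that the closed discs $\overline D_n$ are pairwise disjoint for $n>\tilde N$. For an integer $m\ge0$ let $P(\lambda)=\lambda^m\prod_{n=1}^\infty(1-\lambda/\eta_n)$. Then $1/P\in\mathcal A_1\big(\mathbb{C}\setminus\bigcup_{n=0}^\infty\overline D_n\big)$.
   Context: For an open set $\Omega'\subset\mathbb{C}$ and $p>0$, $\mathcal A_p(\Omega')$ is the set of holomorphic $f$ on $\Omega'$ for which there exist $c,M>0$ with $|f(\lambda)|\le Me^{c|\lambda|^p}$ for all $\lambda\in\Omega'$. Here $1/P$ denotes the multiplicative inverse of $P$. *)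

From Stdlib Require Export Reals.
From Coquelicot Require Export Coquelicot.

Open Scope C_scope.

Definition holomorphic_on (Om : C -> Prop) (f : C -> C) : Prop :=
  forall z : C, Om z -> @ex_derive C_AbsRing C_NormedModule f z.

(* |z|^p for real p > 0 (with 0^p = 0). *)
Definition cpow_abs (z : C) (p : R) : R :=
  if Req_EM_T (Cmod z) 0 then 0%R else Rpower (Cmod z) p.

Definition A_ (p : R) (Om : C -> Prop) (f : C -> C) : Prop :=
  holomorphic_on Om f /\
  exists c M : R, (0 < c)%R /\ (0 < M)%R /\
    forall l : C, Om l -> (Cmod (f l) <= M * exp (c * cpow_abs l p))%R.

Fixpoint partial_prod (eta : nat -> C) (N : nat) (l : C) : C :=
  match N with
  | O => 1
  | S k => partial_prod eta k l * (1 - l / eta (S k))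
  end.

From Stdlib Require Import Lra Lia Psatz Compare_dec.

(* Let z lie outside all the discs, r = |z|; every zero eta_n is then at distance
   at least Rad/2 from z.  A factor with |eta_n| >= 2r satisfies
   |1 - z/eta_n| >= exp (-2r/|eta_n|), and sum 1/|eta_n| < oo because |eta_n| >= C n^2.
   Each of the remaining factors is at least Rad/(4r), and there are j of them with
   C j^2 <= C N^2 + 2r; since j ln x <= j^2 + x, their product is at least
   exp (-(N^2 + (2/C + 4/Rad) r)).  Together with |z|^m >= (Rad/2)^m this bounds
   |P(z)| from below by a constant times exp (-c r), uniformly in the number of factors.
   Holomorphy of P comes from a quadratic remainder estimate for the truncated
   products, again uniform in the number of factors. *)

Section Real_inequalities.

Local Open Scope R_scope.

Lemma exp_le_exp (a b : R) : a <= b -> exp a <= exp b.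
Proof. intros [H|H]; [left; apply exp_increasing, H | subst; lra]. Qed.

Lemma exp_neg_double_le (t : R) : 0 <= t <= 1 / 2 -> exp (- (2 * t)) <= 1 - t.
Proof.
  intros Ht. rewrite exp_Ropp.
  assert (H := exp_ineq1_le (2 * t)).
  apply Rle_trans with (/ (1 + 2 * t)); [apply Rinv_le_contravar; lra|].
  apply (Rmult_le_reg_r (1 + 2 * t)); [lra|].
  rewrite Rinv_l by lra. nra.
Qed.

Lemma mul_ln_le (J x : R) : 0 <= J -> 0 < x -> J * ln x <= J ^ 2 + x.
Proof.
  intros HJ Hx.
  (* ln x = 2 ln (sqrt x) <= 2 sqrt x, then AM-GM *)
  assert (Hs : 0 < sqrt x) by (apply sqrt_lt_R0, Hx).
  assert (Hss : sqrt x * sqrt x = x) by (apply sqrt_sqrt; lra).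
  assert (Hl : ln x = 2 * ln (sqrt x)) by (rewrite <- Hss at 1; rewrite ln_mult; lra).
  assert (Hle : ln (sqrt x) <= sqrt x - 1).
  { assert (H := exp_ineq1_le (ln (sqrt x))). rewrite exp_ln in H; lra. }
  assert (J * ln (sqrt x) <= J * (sqrt x - 1)) by (apply Rmult_le_compat_l; lra).
  assert (0 <= (J - sqrt x) ^ 2) by apply pow2_ge_0.
  rewrite Hl. nra.
Qed.

Lemma exp_neg_sq_le_pow (y : R) (j : nat) : 0 < y -> exp (- (INR j ^ 2 + / y)) <= y ^ j.
Proof.
  intros Hy.
  rewrite <- (Rpower_pow j y Hy). unfold Rpower.
  apply exp_le_exp.
  assert (H := mul_ln_le (INR j) (/ y) (pos_INR j) (Rinv_0_lt_compat y Hy)).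
  rewrite ln_Rinv in H by exact Hy. lra.
Qed.

End Real_inequalities.

Lemma Cmod_triang_inv (a b : C) : (Cmod a - Cmod b <= Cmod (a - b))%R.
Proof.
  assert (H := Cmod_triangle (a - b) b).
  replace (a - b + b) with a in H by ring. lra.
Qed.

Lemma Cmod_sub_le (a b : C) : (Cmod (a - b) <= Cmod a + Cmod b)%R.
Proof. eapply Rle_trans; [apply Cmod_triangle|]. rewrite Cmod_opp. lra. Qed.

Lemma is_derive_quadratic_remainder {V : NormedModule C_AbsRing}
  (f : C -> V) (z0 : C) (D : V) (B d : R) :
  (0 < d)%R ->
  (forall h : C, (Cmod h <= d)%R ->
     (norm (minus (minus (f (z0 + h)%C) (f z0)) (scal h D)) <= B * Cmod h ^ 2)%R) ->
  is_derive f z0 D.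
Proof.
  intros Hd HB. split; [apply is_linear_scal_l|].
  intros x Hx eps.
  assert (Ex : z0 = x)
    by exact (@is_filter_lim_locally_unique C_AbsRing (AbsRing_NormedModule C_AbsRing) z0 x Hx).
  subst x.
  apply (@locally_le_locally_norm C_AbsRing (AbsRing_NormedModule C_AbsRing)).
  assert (HB0 : (0 <= B)%R).
  { assert (H := HB (RtoC d)). rewrite Cmod_R, Rabs_pos_eq in H by lra.
    specialize (H (Rle_refl d)).
    assert (0 <= B * d ^ 2)%R by (eapply Rle_trans; [apply (norm_ge_0 (V := V)) | exact H]).
    apply (Rmult_le_reg_r (d ^ 2)); nra. }
  assert (Hp : (0 < Rmin d (eps / (B + 1)))%R).
  { apply Rmin_pos; [lra|]. apply Rdiv_lt_0_compat; [apply cond_pos | lra]. }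
  exists (mkposreal _ Hp). intros y Hy.
  change (Cmod (y - z0) < Rmin d (eps / (B + 1)))%R in Hy.
  change (norm (minus (minus (f y) (f z0)) (scal (y - z0)%C D)) <= eps * Cmod (y - z0))%R.
  set (h := y - z0) in *. replace y with (z0 + h) by (unfold h; ring).
  assert (Hh1 : (Cmod h <= d)%R) by (apply Rlt_le, (Rlt_le_trans _ _ _ Hy), Rmin_l).
  assert (Hh2 : (Cmod h <= eps / (B + 1))%R) by (apply Rlt_le, (Rlt_le_trans _ _ _ Hy), Rmin_r).
  assert (HBh : (B * Cmod h <= eps)%R).
  { apply Rle_trans with ((B + 1) * (eps / (B + 1)))%R.
    - assert (H0 := Cmod_ge_0 h). nra.
    - right. field. lra. }
  eapply Rle_trans; [apply HB, Hh1|].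
  assert (H0 := Cmod_ge_0 h). simpl. nra.
Qed.

Lemma Cinv_quadratic_remainder (w h : C) :
  w <> 0 -> (Cmod h <= Cmod w / 2)%R ->
  (Cmod (/ (w + h) - / w - h * (- / (w * w))) <= 2 / Cmod w ^ 3 * Cmod h ^ 2)%R.
Proof.
  intros Hw Hh.
  assert (Hw0 : (0 < Cmod w)%R) by (apply Cmod_gt_0; auto).
  assert (Hwh : (Cmod w / 2 <= Cmod (w + h))%R).
  { assert (H := Cmod_triang_inv w (- h)). rewrite Cmod_opp in H.
    replace (w - - h) with (w + h) in H by ring. lra. }
  assert (Hwh0 : w + h <> 0) by (intro E; rewrite E, Cmod_0 in Hwh; lra).
  replace (/ (w + h) - / w - h * (- / (w * w))) with (h * h / (w * w * (w + h)))
    by (field; auto).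
  rewrite Cmod_div by (repeat apply Cmult_neq_0; auto).
  rewrite !Cmod_mult.
  apply Rle_trans with (Cmod h * Cmod h / (Cmod w * Cmod w * (Cmod w / 2)))%R.
  - assert (H0 := Cmod_ge_0 h). unfold Rdiv. apply Rmult_le_compat_l; [nra|].
    apply Rinv_le_contravar.
    + apply Rmult_lt_0_compat; [apply Rmult_lt_0_compat|]; lra.
    + apply Rmult_le_compat_l; [apply Rmult_le_pos|]; lra.
  - right. field. lra.
Qed.

Lemma is_derive_Cinv (w : C) :
  w <> 0 -> @is_derive C_AbsRing C_NormedModule Cinv w (- / (w * w)).
Proof.
  intros Hw. assert (Hw0 : (0 < Cmod w)%R) by (apply Cmod_gt_0; auto).
  apply (is_derive_quadratic_remainder (V := C_NormedModule)) with
    (B := (2 / Cmod w ^ 3)%R) (d := (Cmod w / 2)%R); [lra|].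
  intros h Hh. exact (Cinv_quadratic_remainder w h Hw Hh).
Qed.

Lemma filterlim_Cmod_lt (u : nat -> C) (y : C) :
  filterlim u eventually (locally y) ->
  forall e, (0 < e)%R -> exists N, forall n, (N <= n)%nat -> (Cmod (u n - y) < e)%R.
Proof.
  intros H e He. apply (H (fun z => Cmod (z - y) < e)%R).
  apply (@locally_le_locally_norm C_AbsRing C_NormedModule y).
  exists (mkposreal e He). intros z Hz. exact Hz.
Qed.

Lemma filterlim_C_cauchy (u : nat -> C) (y : C) :
  filterlim u eventually (locally y) ->
  forall e, (0 < e)%R -> exists N, forall n k, (N <= n)%nat -> (N <= k)%nat ->
    (Cmod (u n - u k) < e)%R.
Proof.
  intros H e He. destruct (filterlim_Cmod_lt u y H (e / 2)) as [N HN]; [lra|].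
  exists N. intros n k Hn Hk.
  replace (u n - u k) with ((u n - y) - (u k - y)) by ring.
  eapply Rle_lt_trans; [apply Cmod_sub_le|].
  assert (Hn' := HN n Hn). assert (Hk' := HN k Hk). lra.
Qed.

Lemma C_cauchy_ex_lim (u : nat -> C) :
  (forall e, (0 < e)%R -> exists N, forall n k, (N <= n)%nat -> (N <= k)%nat ->
     (Cmod (u n - u k) < e)%R) ->
  exists y, forall e, (0 < e)%R -> exists N, forall n, (N <= n)%nat -> (Cmod (u n - y) < e)%R.
Proof.
  intros Hc.
  assert (Hex : exists y : C_CompleteNormedModule, filterlim u eventually (locally y)).
  { apply (filterlim_locally_cauchy (U := C_CompleteNormedModule) (F := eventually)).
    intros eps. destruct (Hc eps (cond_pos eps)) as [N HN].
    exists (fun n => (N <= n)%nat). split; [exists N; auto|].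
    intros a b Ha Hb. apply (@norm_compat1 C_AbsRing C_NormedModule).
    exact (HN b a Hb Ha). }
  destruct Hex as [y Hy]. exists y. exact (filterlim_Cmod_lt u y Hy).
Qed.

Lemma Cmod_ge_of_lim (u : nat -> C) (y : C) (b : R) :
  filterlim u eventually (locally y) -> (forall n, (b <= Cmod (u n))%R) -> (b <= Cmod y)%R.
Proof.
  intros Hu Hb. apply Rnot_lt_le. intros Hlt.
  destruct (filterlim_Cmod_lt u y Hu (b - Cmod y)) as [N HN]; [lra|].
  assert (H1 := HN N (le_n N)). assert (H2 := Hb N).
  assert (H3 := Cmod_triang_inv (u N) y). lra.
Qed.

Section Uniform_quadratic_limit.

Variables (Q : nat -> C -> C) (P : C -> C) (z0 : C) (d : nat -> C) (B : R).
Hypothesis B_ge0 : (0 <= B)%R.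
Hypothesis Q_lim : forall l, filterlim (fun K => Q K l) eventually (locally (P l)).
Hypothesis Q_quadratic : forall K h, (Cmod h <= 1)%R ->
  (Cmod (Q K (z0 + h) - Q K z0 - h * d K) <= B * Cmod h ^ 2)%R.

Lemma uniform_quadratic_deriv_cauchy e : (0 < e)%R ->
  exists N, forall n k, (N <= n)%nat -> (N <= k)%nat -> (Cmod (d n - d k) < e)%R.
Proof.
  intros He.
  (* compare the derivatives through the values at z0 and at z0 + del *)
  set (del := Rmin 1 (e / (4 * (B + 1)))).
  assert (Hdel : (0 < del)%R) by (apply Rmin_pos; [lra | apply Rdiv_lt_0_compat; lra]).
  assert (Hdel1 : (del <= 1)%R) by apply Rmin_l.
  assert (HBdel : (B * del <= e / 4)%R).
  { apply Rle_trans with ((B + 1) * (e / (4 * (B + 1))))%R.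
    - apply Rmult_le_compat; [lra | lra | lra | apply Rmin_r].
    - right. field. lra. }
  set (h := RtoC del).
  assert (Hh : Cmod h = del) by (unfold h; rewrite Cmod_R; apply Rabs_pos_eq; lra).
  destruct (filterlim_C_cauchy _ _ (Q_lim (z0 + h)) (e * del / 4)) as [N1 HN1]; [nra|].
  destruct (filterlim_C_cauchy _ _ (Q_lim z0) (e * del / 4)) as [N2 HN2]; [nra|].
  exists (max N1 N2). intros n k Hn Hk.
  assert (Hmul : (Cmod (h * (d n - d k)) < e * del)%R).
  { replace (h * (d n - d k)) with
      ((Q n (z0 + h) - Q k (z0 + h)) - (Q n z0 - Q k z0)
       - ((Q n (z0 + h) - Q n z0 - h * d n) - (Q k (z0 + h) - Q k z0 - h * d k))) by ring.
    assert (A1 := HN1 n k ltac:(lia) ltac:(lia)).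
    assert (A2 := HN2 n k ltac:(lia) ltac:(lia)).
    assert (A3 := Q_quadratic n h ltac:(lra)). assert (A4 := Q_quadratic k h ltac:(lra)).
    rewrite Hh in A3, A4.
    assert (A5 := Cmod_sub_le (Q n (z0 + h) - Q n z0 - h * d n) (Q k (z0 + h) - Q k z0 - h * d k)).
    assert (A6 := Cmod_sub_le (Q n (z0 + h) - Q k (z0 + h)) (Q n z0 - Q k z0)).
    eapply Rle_lt_trans; [apply Cmod_sub_le|]. nra. }
  rewrite Cmod_mult, Hh in Hmul.
  assert (H0 := Cmod_ge_0 (d n - d k)). nra.
Qed.

Lemma ex_derive_uniform_quadratic_limit :
  exists D, @is_derive C_AbsRing (AbsRing_NormedModule C_AbsRing) P z0 D.
Proof.
  destruct (C_cauchy_ex_lim d uniform_quadratic_deriv_cauchy) as [D HD]. exists D.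
  apply (is_derive_quadratic_remainder (V := AbsRing_NormedModule C_AbsRing))
    with (B := B) (d := 1%R); [lra|].
  intros h Hh. change (Cmod (P (z0 + h) - P z0 - h * D) <= B * Cmod h ^ 2)%R.
  apply le_epsilon. intros e He.
  destruct (filterlim_Cmod_lt _ _ (Q_lim (z0 + h)) (e / 3)) as [N1 HN1]; [lra|].
  destruct (filterlim_Cmod_lt _ _ (Q_lim z0) (e / 3)) as [N2 HN2]; [lra|].
  destruct (HD (e / 3)%R) as [N3 HN3]; [lra|].
  set (n := max N1 (max N2 N3)).
  assert (A1 := HN1 n ltac:(lia)). assert (A2 := HN2 n ltac:(lia)).
  assert (A3 := HN3 n ltac:(lia)). assert (A4 := Q_quadratic n h Hh).
  replace (P (z0 + h) - P z0 - h * D) with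
    ((Q n (z0 + h) - Q n z0 - h * d n) + h * (d n - D)
     - ((Q n (z0 + h) - P (z0 + h)) - (Q n z0 - P z0))) by ring.
  eapply Rle_trans; [apply Cmod_sub_le|].
  assert (A5 := Cmod_sub_le (Q n (z0 + h) - P (z0 + h)) (Q n z0 - P z0)).
  assert (A6 := Cmod_triangle (Q n (z0 + h) - Q n z0 - h * d n) (h * (d n - D))).
  rewrite Cmod_mult in A6.
  assert (H0 := Cmod_ge_0 (d n - D)). assert (H1 := Cmod_ge_0 h). nra.
Qed.

End Uniform_quadratic_limit.

(* [a], [b], [d] play the roles of f (z0 + h), f z0 and f' z0; multiplying by a linear
   factor only grows [Y] additively and [W] multiplicatively, which keeps the remainder
   bound for the partial products uniform in their number of factors. *)
Definition quad_approx (h a b d : C) (Y W : R) : Prop :=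
  (Cmod a <= W)%R /\ (Cmod (a - b) <= Cmod h * Y * W)%R /\
  (Cmod (a - b - h * d) <= Cmod h ^ 2 * Y ^ 2 * W)%R.

Lemma quad_approx_mul_linear (h a b d x y : C) (Y W Wf : R) :
  (0 <= Y)%R -> (Cmod h <= 1)%R -> (1 <= Wf)%R -> (Cmod x + Cmod y <= Wf)%R ->
  quad_approx h a b d Y W ->
  quad_approx h (a * (x + y * h)) (b * x) (d * x + b * y) (Y + Cmod y) (W * Wf).
Proof.
  intros HY Hh HWf Hxy [Ha [Hab Habd]].
  assert (Ha0 := Cmod_ge_0 a). assert (Hx := Cmod_ge_0 x). assert (Hy := Cmod_ge_0 y).
  assert (Hh0 := Cmod_ge_0 h). assert (Hab0 := Cmod_ge_0 (a - b)).
  assert (HW : (0 <= W)%R) by lra.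
  assert (HWWf : (W <= W * Wf)%R) by nra.
  split; [|split].
  - rewrite Cmod_mult.
    assert (Cmod (x + y * h) <= Wf)%R.
    { eapply Rle_trans; [apply Cmod_triangle|]. rewrite Cmod_mult. nra. }
    apply Rmult_le_compat; try apply Cmod_ge_0; lra.
  - replace (a * (x + y * h) - b * x) with (x * (a - b) + h * (y * a)) by ring.
    eapply Rle_trans; [apply Cmod_triangle|]. rewrite !Cmod_mult.
    assert (Cmod x * Cmod (a - b) <= Wf * (Cmod h * Y * W))%R
      by (apply Rmult_le_compat; try apply Cmod_ge_0; lra).
    assert (Cmod y * Cmod a <= Cmod y * (W * Wf))%R by (apply Rmult_le_compat_l; lra).
    assert (Cmod h * (Cmod y * Cmod a) <= Cmod h * (Cmod y * (W * Wf)))%R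
      by (apply Rmult_le_compat_l; lra).
    nra.
  - replace (a * (x + y * h) - b * x - h * (d * x + b * y)) with
      (x * (a - b - h * d) + h * (y * (a - b))) by ring.
    eapply Rle_trans; [apply Cmod_triangle|]. rewrite !Cmod_mult.
    assert (Cmod x * Cmod (a - b - h * d) <= Wf * (Cmod h ^ 2 * Y ^ 2 * W))%R
      by (apply Rmult_le_compat; [apply Cmod_ge_0 | apply Cmod_ge_0 | lra | lra]).
    assert (Cmod (a - b) <= Cmod h * Y * (W * Wf))%R.
    { eapply Rle_trans; [exact Hab|]. apply Rmult_le_compat_l; [apply Rmult_le_pos|]; lra. }
    assert (Cmod h * (Cmod y * Cmod (a - b)) <= Cmod h * (Cmod y * (Cmod h * Y * (W * Wf))))%R.
    { apply Rmult_le_compat_l; [lra|]. apply Rmult_le_compat_l; lra. }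
    assert (0 <= Cmod h ^ 2 * (W * Wf) * (Cmod y * Y + Cmod y ^ 2))%R.
    { apply Rmult_le_pos; [apply Rmult_le_pos|]; nra. }
    nra.
Qed.

Fixpoint inv_abs_sum (eta : nat -> C) (K : nat) : R :=
  match K with
  | O => 0
  | S k => inv_abs_sum eta k + / Cmod (eta (S k))
  end.

Fixpoint partial_prod_deriv (eta : nat -> C) (z : C) (K : nat) : C :=
  match K with
  | O => 0
  | S k => partial_prod_deriv eta z k * (1 - z / eta (S k))
           + partial_prod eta k z * (- / eta (S k))
  end.

Fixpoint pow_partial_prod_deriv (eta : nat -> C) (z : C) (K j : nat) : C :=
  match j with
  | O => partial_prod_deriv eta z K
  | S i => pow_partial_prod_deriv eta z K i * z + z ^ i * partial_prod eta K z
  end.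

Section Partial_products.

Variable eta : nat -> C.
Hypothesis eta_neq0 : forall n, (1 <= n)%nat -> eta n <> 0.

Lemma Cmod_eta_gt0 n : (1 <= n)%nat -> (0 < Cmod (eta n))%R.
Proof. intros Hn. apply Cmod_gt_0, eta_neq0, Hn. Qed.

Lemma inv_abs_sum_ge0 K : (0 <= inv_abs_sum eta K)%R.
Proof.
  induction K as [|K IH]; simpl; [lra|].
  assert (H := Rinv_0_lt_compat _ (Cmod_eta_gt0 (S K) ltac:(lia))). lra.
Qed.

Lemma inv_abs_sum_le K K' : (K <= K')%nat -> (inv_abs_sum eta K <= inv_abs_sum eta K')%R.
Proof.
  induction 1 as [|K' _ IH]; simpl; [lra|].
  assert (H := Rinv_0_lt_compat _ (Cmod_eta_gt0 (S K') ltac:(lia))). lra.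
Qed.

Lemma quad_approx_partial_prod (z0 h : C) : (Cmod h <= 1)%R -> forall K,
  quad_approx h (partial_prod eta K (z0 + h)) (partial_prod eta K z0)
    (partial_prod_deriv eta z0 K) (inv_abs_sum eta K)
    (exp ((Cmod z0 + 1) * inv_abs_sum eta K)).
Proof.
  intros Hh K. induction K as [|K IH]; simpl.
  - unfold quad_approx. rewrite Rmult_0_r, exp_0, Cmod_1.
    replace (1 - 1 - h * 0) with (RtoC 0) by ring. replace (1 - 1) with (RtoC 0) by ring.
    rewrite Cmod_0. repeat split; ring_simplify; lra.
  - set (e := eta (S K)).
    assert (He : e <> 0) by (apply eta_neq0; lia).
    assert (He0 : (0 < Cmod e)%R) by (apply Cmod_gt_0, He).
    set (t := ((Cmod z0 + 1) / Cmod e)%R).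
    assert (Ht : (0 <= t)%R).
    { assert (H := Cmod_ge_0 z0). apply Rdiv_le_0_compat; lra. }
    replace (1 - (z0 + h) / e) with ((1 - z0 / e) + (- / e) * h) by (field; auto).
    replace (/ Cmod e)%R with (Cmod (- / e)) by (rewrite Cmod_opp, Cmod_inv; auto).
    replace ((Cmod z0 + 1) * (inv_abs_sum eta K + Cmod (- / e)))%R
      with ((Cmod z0 + 1) * inv_abs_sum eta K + t)%R
      by (unfold t; rewrite Cmod_opp, Cmod_inv by auto; field; lra).
    rewrite exp_plus.
    assert (Hexp := exp_ineq1_le t).
    apply quad_approx_mul_linear; auto.
    + apply inv_abs_sum_ge0.
    + lra.
    + assert (H1 := Cmod_sub_le 1 (z0 / e)).
      rewrite Cmod_1, Cmod_div in H1 by auto.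
      rewrite Cmod_opp, Cmod_inv by auto.
      assert (Cmod z0 / Cmod e + / Cmod e = t)%R by (unfold t; field; lra).
      lra.
Qed.

Lemma quad_approx_pow_partial_prod (z0 h : C) (K : nat) : (Cmod h <= 1)%R -> forall j,
  quad_approx h ((z0 + h) ^ j * partial_prod eta K (z0 + h)) (z0 ^ j * partial_prod eta K z0)
    (pow_partial_prod_deriv eta z0 K j) (inv_abs_sum eta K + INR j)
    (exp ((Cmod z0 + 1) * inv_abs_sum eta K) * (Cmod z0 + 1) ^ j).
Proof.
  intros Hh j. induction j as [|j IH].
  - simpl. rewrite Rplus_0_r, Rmult_1_r, !Cmult_1_l. apply quad_approx_partial_prod, Hh.
  - rewrite S_INR. simpl pow_partial_prod_deriv.
    replace ((z0 + h) ^ S j * partial_prod eta K (z0 + h)) with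
      (((z0 + h) ^ j * partial_prod eta K (z0 + h)) * (z0 + 1 * h)) by (rewrite Cpow_S; ring).
    replace (z0 ^ S j * partial_prod eta K z0) with ((z0 ^ j * partial_prod eta K z0) * z0)
      by (rewrite Cpow_S; ring).
    replace (z0 ^ j * partial_prod eta K z0) with ((z0 ^ j * partial_prod eta K z0) * 1) at 2
      by ring.
    replace (inv_abs_sum eta K + (INR j + 1))%R with (inv_abs_sum eta K + INR j + Cmod 1)%R
      by (rewrite Cmod_1; ring).
    replace (exp ((Cmod z0 + 1) * inv_abs_sum eta K) * (Cmod z0 + 1) ^ S j)%R with
      (exp ((Cmod z0 + 1) * inv_abs_sum eta K) * (Cmod z0 + 1) ^ j * (Cmod z0 + 1))%R
      by (simpl; ring).
    assert (H0 := inv_abs_sum_ge0 K). assert (H1 := pos_INR j). assert (H2 := Cmod_ge_0 z0).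
    apply quad_approx_mul_linear; auto; rewrite ?Cmod_1; lra.
Qed.

Lemma pow_partial_prod_quadratic_remainder (s : R) (m : nat) (z0 : C) :
  (forall K, inv_abs_sum eta K <= s)%R -> forall K h, (Cmod h <= 1)%R ->
  (Cmod ((z0 + h) ^ m * partial_prod eta K (z0 + h) - z0 ^ m * partial_prod eta K z0
         - h * pow_partial_prod_deriv eta z0 K m)
   <= (s + INR m) ^ 2 * (exp ((Cmod z0 + 1) * s) * (Cmod z0 + 1) ^ m) * Cmod h ^ 2)%R.
Proof.
  intros HS K h Hh.
  destruct (quad_approx_pow_partial_prod z0 h K Hh m) as [_ [_ Hrem]].
  eapply Rle_trans; [exact Hrem|].
  assert (H0 := inv_abs_sum_ge0 K). assert (H1 := pos_INR m). assert (H2 := Cmod_ge_0 z0).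
  assert (H3 := HS K). assert (H4 := Cmod_ge_0 h).
  assert (Hexp : (exp ((Cmod z0 + 1) * inv_abs_sum eta K) <= exp ((Cmod z0 + 1) * s))%R)
    by (apply exp_le_exp, Rmult_le_compat_l; lra).
  assert (Hsq : ((inv_abs_sum eta K + INR m) ^ 2 <= (s + INR m) ^ 2)%R) by (apply pow_incr; lra).
  assert (Hpow : (0 <= (Cmod z0 + 1) ^ m)%R) by (apply pow_le; lra).
  assert (Hexp0 := exp_pos ((Cmod z0 + 1) * inv_abs_sum eta K)).
  apply Rle_trans with
    (Cmod h ^ 2 * (s + INR m) ^ 2 * (exp ((Cmod z0 + 1) * s) * (Cmod z0 + 1) ^ m))%R;
    [|right; ring].
  assert (0 <= Cmod h ^ 2)%R by nra.
  apply Rmult_le_compat.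
  - apply Rmult_le_pos; nra.
  - apply Rmult_le_pos; lra.
  - apply Rmult_le_compat_l; nra.
  - apply Rmult_le_compat_r; [exact Hpow | exact Hexp].
Qed.

Lemma ex_derive_infinite_product (s : R) (m : nat) (P : C -> C) :
  (forall K, inv_abs_sum eta K <= s)%R ->
  (forall l, filterlim (fun K => l ^ m * partial_prod eta K l) eventually (locally (P l))) ->
  forall z, exists D, @is_derive C_AbsRing (AbsRing_NormedModule C_AbsRing) P z D.
Proof.
  intros HS HP z.
  assert (HS0 : (0 <= s)%R) by (eapply Rle_trans; [apply (inv_abs_sum_ge0 0) | apply HS]).
  assert (H0 := Cmod_ge_0 z).
  apply (ex_derive_uniform_quadratic_limit (fun K l => l ^ m * partial_prod eta K l) P z
           (fun K => pow_partial_prod_deriv eta z K m)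
           ((s + INR m) ^ 2 * (exp ((Cmod z + 1) * s) * (Cmod z + 1) ^ m))).
  - assert (Hpow : (0 <= (Cmod z + 1) ^ m)%R) by (apply pow_le; lra).
    assert (He := exp_pos ((Cmod z + 1) * s)).
    apply Rmult_le_pos; [apply pow2_ge_0 | apply Rmult_le_pos; lra].
  - exact HP.
  - apply pow_partial_prod_quadratic_remainder, HS.
Qed.

End Partial_products.

Local Open Scope R_scope.

Fixpoint small_count (eta : nat -> C) (t : R) (K : nat) : nat :=
  match K with
  | O => O
  | S k => if Rlt_dec (Cmod (eta (S k))) t then S (small_count eta t k) else small_count eta t k
  end.

Section Growth.

Variables (eta : nat -> C) (Cst : R) (N : nat).
Hypothesis eta_neq0 : forall n, (1 <= n)%nat -> eta n <> 0%C.
Hypothesis N_gt0 : (0 < N)%nat.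
Hypothesis Cst_gt0 : 0 < Cst.
Hypothesis eta_growth : forall n, (N <= n)%nat -> Cst * INR n ^ 2 <= Cmod (eta n).

Lemma inv_abs_sum_bounded K : inv_abs_sum eta K <= inv_abs_sum eta N + / (Cst * INR N).
Proof.
  assert (HNr : 1 <= INR N) by (apply (le_INR 1); lia).
  assert (Hpos : 0 < / (Cst * INR N)) by (apply Rinv_0_lt_compat; nra).
  destruct (le_lt_dec K N) as [HK|HK].
  { assert (H := inv_abs_sum_le eta eta_neq0 K N HK). lra. }
  (* 1/|eta_(k+1)| <= 1/(Cst (k+1)^2) <= (1/k - 1/(k+1))/Cst telescopes *)
  assert (Htele : forall i, inv_abs_sum eta (N + i)
                            <= inv_abs_sum eta N + / Cst * (/ INR N - / INR (N + i))).
  { induction i as [|i IH].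
    - rewrite Nat.add_0_r. lra.
    - rewrite Nat.add_succ_r. simpl inv_abs_sum.
      set (k := INR (N + i)) in *.
      assert (Hk : INR N <= k) by (apply le_INR; lia).
      assert (HS : INR (S (N + i)) = k + 1) by (rewrite S_INR; reflexivity).
      assert (Hge := eta_growth (S (N + i)) ltac:(lia)). rewrite HS in Hge.
      assert (/ Cmod (eta (S (N + i))) <= / (Cst * (k + 1) ^ 2))
        by (apply Rinv_le_contravar; nra).
      assert (/ (Cst * (k + 1) ^ 2) <= / Cst * (/ k - / (k + 1))).
      { replace (/ Cst * (/ k - / (k + 1))) with (/ (Cst * (k * (k + 1)))) by (field; lra).
        apply Rinv_le_contravar; nra. }
      rewrite HS. lra. }
  replace K with (N + (K - N))%nat by lia.
  eapply Rle_trans; [apply Htele|].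
  assert (0 < / INR (N + (K - N))) by (apply Rinv_0_lt_compat, lt_0_INR; lia).
  replace (/ (Cst * INR N)) with (/ Cst * / INR N) by (field; lra).
  assert (0 < / Cst) by (apply Rinv_0_lt_compat, Cst_gt0). nra.
Qed.

Lemma small_count_sq_le (t : R) K :
  0 <= t -> Cst * INR (small_count eta t K) ^ 2 <= Cst * INR N ^ 2 + t.
Proof.
  intros Ht.
  (* the j-th small zero has index at least j *)
  assert (Hinv : (small_count eta t K <= K)%nat /\
                 ((small_count eta t K <= N)%nat \/ Cst * INR (small_count eta t K) ^ 2 < t)).
  { induction K as [|K [IH1 IH2]]; simpl; [lia|].
    destruct (Rlt_dec (Cmod (eta (S K))) t) as [Hs|Hs]; [|auto].
    split; [lia|].
    destruct (le_lt_dec N (S K)) as [HK|HK]; [right | left; lia].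
    assert (H := eta_growth (S K) HK).
    assert (INR (S (small_count eta t K)) <= INR (S K)) by (apply le_INR; lia).
    assert (INR (S (small_count eta t K)) ^ 2 <= INR (S K) ^ 2)
      by (apply pow_incr; split; [apply pos_INR | assumption]).
    nra. }
  destruct Hinv as [_ [Hj|Hj]].
  - assert (INR (small_count eta t K) <= INR N) by (apply le_INR, Hj).
    assert (INR (small_count eta t K) ^ 2 <= INR N ^ 2)
      by (apply pow_incr; split; [apply pos_INR | assumption]).
    assert (Cst * INR (small_count eta t K) ^ 2 <= Cst * INR N ^ 2)
      by (apply Rmult_le_compat_l; lra).
    lra.
  - assert (0 <= INR N ^ 2) by apply pow2_ge_0. nra.
Qed.

End Growth.

Section Lower_bound.

Variables (eta : nat -> C) (Cst : R) (N : nat) (z : C) (d : R).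
Hypothesis eta_neq0 : forall n, (1 <= n)%nat -> eta n <> 0%C.
Hypothesis N_gt0 : (0 < N)%nat.
Hypothesis Cst_gt0 : 0 < Cst.
Hypothesis eta_growth : forall n, (N <= n)%nat -> Cst * INR n ^ 2 <= Cmod (eta n).
Hypothesis d_gt0 : 0 < d.
Hypothesis d_le_z : d <= Cmod z.
Hypothesis d_le_dist : forall n, (1 <= n)%nat -> d <= Cmod (eta n - z).

Let r := Cmod z.

Lemma Cmod_factor_ge_small n : (1 <= n)%nat -> Cmod (eta n) < 2 * r ->
  d / (2 * r) <= Cmod (1 - z / eta n).
Proof.
  intros Hn Hs.
  assert (He : 0 < Cmod (eta n)) by (apply Cmod_gt_0, eta_neq0, Hn).
  replace (1 - z / eta n)%C with ((eta n - z) / eta n)%C by (field; apply eta_neq0, Hn).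
  rewrite Cmod_div by (apply eta_neq0, Hn).
  assert (Hd := d_le_dist n Hn).
  apply Rle_trans with (d / Cmod (eta n)).
  - apply Rmult_le_compat_l; [lra|]. apply Rinv_le_contravar; lra.
  - apply Rmult_le_compat_r; [apply Rlt_le, Rinv_0_lt_compat|]; lra.
Qed.

Lemma Cmod_factor_ge_large n : (1 <= n)%nat -> 2 * r <= Cmod (eta n) ->
  exp (- (2 * r / Cmod (eta n))) <= Cmod (1 - z / eta n).
Proof.
  intros Hn Hb.
  assert (He : 0 < Cmod (eta n)) by (apply Cmod_gt_0, eta_neq0, Hn).
  assert (Ht : 0 <= r / Cmod (eta n) <= 1 / 2).
  { split; [apply Rdiv_le_0_compat; unfold r; [apply Cmod_ge_0 | lra]|].
    apply (Rmult_le_reg_r (Cmod (eta n))); [lra|]. field_simplify; lra. }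
  replace (2 * r / Cmod (eta n)) with (2 * (r / Cmod (eta n))) by (field; lra).
  eapply Rle_trans; [apply exp_neg_double_le, Ht|].
  assert (H := Cmod_triang_inv 1 (z / eta n)).
  rewrite Cmod_1, Cmod_div in H by (apply eta_neq0, Hn). exact H.
Qed.

Lemma Cmod_partial_prod_ge K :
  (d / (2 * r)) ^ small_count eta (2 * r) K * exp (- (2 * r * inv_abs_sum eta K))
  <= Cmod (partial_prod eta K z).
Proof.
  assert (Hr : 0 < r) by (unfold r; lra).
  assert (Hy : 0 < d / (2 * r)) by (apply Rdiv_lt_0_compat; lra).
  induction K as [|K IH]; simpl.
  - rewrite Cmod_1, Rmult_0_r, Ropp_0, exp_0. lra.
  - rewrite Cmod_mult.
    assert (He : 0 < Cmod (eta (S K))) by (apply Cmod_gt_0, eta_neq0; lia).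
    set (q := (d / (2 * r)) ^ small_count eta (2 * r) K) in *.
    assert (Hq : 0 <= q) by (apply pow_le; lra).
    replace (- (2 * r * (inv_abs_sum eta K + / Cmod (eta (S K)))))
      with (- (2 * r * inv_abs_sum eta K) + - (2 * r / Cmod (eta (S K)))) by (field; lra).
    rewrite exp_plus.
    assert (HE := exp_pos (- (2 * r * inv_abs_sum eta K))).
    assert (HE' := exp_pos (- (2 * r / Cmod (eta (S K))))).
    destruct (Rlt_dec (Cmod (eta (S K))) (2 * r)) as [Hs|Hs].
    + assert (F := Cmod_factor_ge_small (S K) ltac:(lia) Hs).
      assert (Hsm : exp (- (2 * r / Cmod (eta (S K)))) <= 1).
      { rewrite <- exp_0. apply exp_le_exp.
        assert (0 <= 2 * r / Cmod (eta (S K))) by (apply Rdiv_le_0_compat; lra). lra. }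
      simpl pow. fold q.
      apply Rle_trans with (q * exp (- (2 * r * inv_abs_sum eta K)) * (d / (2 * r))).
      * assert (0 <= q * exp (- (2 * r * inv_abs_sum eta K)) * (d / (2 * r)))
          by (apply Rmult_le_pos; [apply Rmult_le_pos|]; lra).
        nra.
      * apply Rmult_le_compat; [nra | lra | exact IH | exact F].
    + apply Rnot_lt_le in Hs.
      assert (F := Cmod_factor_ge_large (S K) ltac:(lia) Hs).
      rewrite <- Rmult_assoc.
      apply Rmult_le_compat; [fold q; nra | lra | exact IH | exact F].
Qed.

Lemma Cmod_pow_partial_prod_ge (s : R) (m K : nat) :
  (forall K, inv_abs_sum eta K <= s) ->
  d ^ m * exp (- INR N ^ 2) * exp (- ((2 / Cst + 2 / d + 2 * s) * r))
  <= Cmod (z ^ m * partial_prod eta K z).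
Proof.
  intros Hs.
  assert (Hr : 0 < r) by (unfold r; lra).
  rewrite Cmod_mult, Cmod_pow. fold r.
  set (j := small_count eta (2 * r) K).
  assert (Hj := small_count_sq_le eta Cst N N_gt0 Cst_gt0 eta_growth (2 * r) K ltac:(lra)).
  fold j in Hj.
  assert (Hpow := exp_neg_sq_le_pow (d / (2 * r)) j ltac:(apply Rdiv_lt_0_compat; lra)).
  assert (Hlow := Cmod_partial_prod_ge K). fold j in Hlow.
  assert (Hsum := Hs K).
  assert (HdN : 0 <= d ^ m) by (apply pow_le; lra).
  assert (Hdm : d ^ m <= r ^ m) by (apply pow_incr; unfold r; lra).
  rewrite Rmult_assoc.
  apply Rmult_le_compat;
    [exact HdN | apply Rlt_le, Rmult_lt_0_compat; apply exp_pos | exact Hdm |].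
  eapply Rle_trans; [|exact Hlow].
  rewrite <- exp_plus.
  apply Rle_trans with
    (exp (- (INR j ^ 2 + / (d / (2 * r)))) * exp (- (2 * r * inv_abs_sum eta K))).
  - rewrite <- exp_plus. apply exp_le_exp.
    assert (Hjr : INR j ^ 2 <= INR N ^ 2 + 2 * r / Cst).
    { apply (Rmult_le_reg_l Cst); [lra|]. replace (Cst * (INR N ^ 2 + 2 * r / Cst)) with
        (Cst * INR N ^ 2 + 2 * r) by (field; lra). exact Hj. }
    replace (/ (d / (2 * r))) with (2 / d * r) by (field; lra).
    replace (2 * r / Cst) with (2 / Cst * r) in Hjr by (field; lra).
    nra.
  - apply Rmult_le_compat_r; [apply Rlt_le, exp_pos | exact Hpow].
Qed.

Lemma Cmod_infinite_product_ge (s : R) (m : nat) (Pz : C) :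
  (forall K, inv_abs_sum eta K <= s) ->
  filterlim (fun K => (z ^ m * partial_prod eta K z)%C) eventually (locally Pz) ->
  exp (- ((2 / Cst + 2 / d + 2 * s) * Cmod z)) <= exp (INR N ^ 2) / d ^ m * Cmod Pz.
Proof.
  intros Hs HP.
  assert (Hlow := Cmod_ge_of_lim _ _ _ HP
                    (fun K => Cmod_pow_partial_prod_ge s m K Hs)).
  assert (Hdm : 0 < d ^ m) by (apply pow_lt, d_gt0).
  assert (HN := exp_pos (INR N ^ 2)).
  apply (Rmult_le_reg_l (d ^ m * exp (- INR N ^ 2))).
  { apply Rmult_lt_0_compat; [exact Hdm | apply exp_pos]. }
  replace (d ^ m * exp (- INR N ^ 2) * (exp (INR N ^ 2) / d ^ m * Cmod Pz)) with (Cmod Pz).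
  - exact Hlow.
  - rewrite exp_Ropp. field. lra.
Qed.

End Lower_bound.

Lemma finite_pos_lower_bound (f : nat -> R) (n0 : nat) :
  (forall n, (n < n0)%nat -> 0 < f n) ->
  exists e, 0 < e <= 1 /\ forall n, (n < n0)%nat -> e <= f n.
Proof.
  induction n0 as [|n0 IH]; intros Hf.
  - exists 1. split; [lra | intros; lia].
  - destruct IH as [e [He Hen]]; [intros; apply Hf; lia|].
    exists (Rmin e (f n0)). split.
    + split; [apply Rmin_pos; [lra | apply Hf; lia]|].
      eapply Rle_trans; [apply Rmin_l | lra].
    + intros n Hn. destruct (Nat.eq_dec n n0) as [->|Hne]; [apply Rmin_r|].
      eapply Rle_trans; [apply Rmin_l | apply Hen; lia].
Qed.

Lemma open_outside_discs (c : nat -> C) (Rad : R) :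
  (forall M, exists n0, forall n, (n0 <= n)%nat -> M < Cmod (c n)) ->
  open (fun z : C => forall n, Rad < Cmod (z - c n)).
Proof.
  intros Hc z Hz.
  (* only finitely many discs come near z *)
  destruct (Hc (Cmod z + Rad + 1)) as [n0 Hn0].
  destruct (finite_pos_lower_bound (fun n => Cmod (z - c n) - Rad) n0) as [e [He Hen]].
  { intros n _. specialize (Hz n). lra. }
  apply (@locally_le_locally_norm C_AbsRing C_NormedModule z).
  exists (mkposreal e (proj1 He)). intros y Hy.
  change C in y. change (Cmod (y - z) < e) in Hy.
  intros n. destruct (lt_dec n n0) as [Hn|Hn].
  - specialize (Hen n Hn). simpl in Hen.
    assert (H := Cmod_triang_inv (z - c n) (z - y)).
    replace (z - c n - (z - y))%C with (y - c n)%C in H by ring.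
    replace (z - y)%C with (- (y - z))%C in H by ring. rewrite Cmod_opp in H. lra.
  - assert (Hb := Hn0 n ltac:(lia)).
    assert (H1 := Cmod_triang_inv (c n) y).
    replace (c n - y)%C with (- (y - c n))%C in H1 by ring. rewrite Cmod_opp in H1.
    assert (H2 := Cmod_triangle (y - z) z). replace (y - z + z)%C with y in H2 by ring.
    lra.
Qed.

Lemma centres_unbounded (eta c : nat -> C) (Cst Rad : R) (N : nat) :
  0 < Cst ->
  (forall n, (N <= n)%nat -> Cst * INR n ^ 2 <= Cmod (eta n)) ->
  (forall n, (1 <= n)%nat -> Cmod (eta n - c n) <= Rad / 2) ->
  forall M, exists n0, forall n, (n0 <= n)%nat -> M < Cmod (c n).
Proof.
  intros HC Hg Hec M.
  destruct (INR_archimed Cst (Rabs M + Rabs Rad + 1) HC) as [n1 Hn1].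
  exists (max (max N 1) n1). intros n Hn.
  assert (H1 : INR n1 <= INR n) by (apply le_INR; lia).
  assert (H2 : 1 <= INR n) by (apply (le_INR 1); lia).
  assert (H3 := Hg n ltac:(lia)). assert (H4 := Hec n ltac:(lia)).
  assert (H5 := Cmod_triang_inv (eta n) (eta n - c n)).
  replace (eta n - (eta n - c n))%C with (c n) in H5 by ring.
  assert (INR n <= INR n ^ 2) by nra.
  assert (Cst * INR n1 <= Cst * INR n ^ 2) by (apply Rmult_le_compat_l; lra).
  assert (H6 := Rle_abs M). assert (H7 := Rle_abs Rad). assert (H8 := Rle_abs (- Rad)).
  rewrite Rabs_Ropp in H8. lra.
Qed.

Lemma cpow_abs_1 (l : C) : cpow_abs l 1 = Cmod l.
Proof.
  unfold cpow_abs. destruct (Req_EM_T (Cmod l) 0) as [E|E]; [lra|].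
  apply Rpower_1. assert (H := Cmod_ge_0 l). lra.
Qed.

Lemma A_1_inv_of_lower_bound (Om : C -> Prop) (P : C -> C) (k M : R) :
  0 < k -> 0 < M ->
  (forall z, Om z -> exists D, @is_derive C_AbsRing (AbsRing_NormedModule C_AbsRing) P z D) ->
  (forall z, Om z -> exp (- (k * Cmod z)) <= M * Cmod (P z)) ->
  A_ 1 Om (fun l => / P l)%C.
Proof.
  intros Hk HM Hder Hlow.
  assert (HPpos : forall z, Om z -> 0 < Cmod (P z)).
  { intros z Hz. assert (H := Hlow z Hz). assert (He := exp_pos (- (k * Cmod z))).
    assert (H0 := Cmod_ge_0 (P z)). nra. }
  assert (HP0 : forall z, Om z -> P z <> 0%C).
  { intros z Hz E. assert (H := HPpos z Hz). rewrite E, Cmod_0 in H. lra. }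
  split.
  - intros z Hz. destruct (Hder z Hz) as [D HD].
    exists (scal D (- / (P z * P z)))%C.
    apply (is_derive_comp Cinv P z); [apply is_derive_Cinv, HP0, Hz | exact HD].
  - exists k, M. split; [exact Hk|]. split; [exact HM|].
    intros l Hl. rewrite cpow_abs_1, Cmod_inv by (apply HP0, Hl).
    assert (H := Hlow l Hl). assert (Hp := HPpos l Hl).
    rewrite exp_Ropp in H. assert (He := exp_pos (k * Cmod l)).
    apply (Rmult_le_reg_l (Cmod (P l))); [exact Hp|].
    rewrite Rinv_r by lra.
    apply (Rmult_le_reg_l (/ exp (k * Cmod l))); [apply Rinv_0_lt_compat, He|].
    replace (/ exp (k * Cmod l) * (Cmod (P l) * (M * exp (k * Cmod l))))
      with (M * Cmod (P l)) by (field; lra).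
    lra.
Qed.

Local Open Scope C_scope.

Lemma half_radius_le_dist (a c z : C) (Rad : R) :
  (Rad < Cmod (z - c))%R -> (Cmod (a - c) <= Rad / 2)%R -> (Rad / 2 <= Cmod (a - z))%R.
Proof.
  intros Hz Ha. assert (H := Cmod_triang_inv (z - c) (a - c)).
  replace (z - c - (a - c)) with (- (a - z)) in H by ring.
  rewrite Cmod_opp in H. lra.
Qed.

Theorem proposition8
  (eta : nat -> C) (Cst : R) (N : nat)
  (c : nat -> C) (Rad : R) (Nt : nat) (m : nat) (P : C -> C) :
  (* eta_n nonzero for n >= 1 *)
  (forall n : nat, (1 <= n)%nat -> eta n <> 0) ->
  (* |eta_n| nondecreasing *)
  (forall n : nat, (1 <= n)%nat -> (Cmod (eta n) <= Cmod (eta (S n)))%R) ->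
  (* growth: N, C > 0 with |eta_n| >= C n^2 for n >= N *)
  (0 < N)%nat -> (0 < Cst)%R ->
  (forall n : nat, (N <= n)%nat -> (Cst * INR n ^ 2 <= Cmod (eta n))%R) ->
  (* discs of radius R > 0 centred at c_n, c_0 = 0, |eta_n - c_n| <= R/2 *)
  (0 < Rad)%R ->
  c 0%nat = 0 ->
  (forall n : nat, (1 <= n)%nat -> (Cmod (eta n - c n) <= Rad / 2)%R) ->
  (* closed discs pairwise disjoint for indices > Nt *)
  (forall n k : nat, (Nt < n)%nat -> (Nt < k)%nat -> n <> k ->
     forall z : C, ~ ((Cmod (z - c n) <= Rad)%R /\ (Cmod (z - c k) <= Rad)%R)) ->
  (* P(l) = l^m prod_{n>=1} (1 - l/eta_n), the infinite product as limit of partial products *)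
  (forall l : C,
     filterlim (fun K : nat => l ^ m * partial_prod eta K l) eventually (locally (P l))) ->
  let Om := fun z : C => forall n : nat, (Rad < Cmod (z - c n))%R in
  open Om /\ A_ 1 Om (fun l : C => / P l).
Proof.
  intros Hne _ HN HC Hg HR Hc0 Hec _ HP Om.
  set (s := (inv_abs_sum eta N + / (Cst * INR N))%R).
  assert (Hs : forall K, (inv_abs_sum eta K <= s)%R)
    by exact (inv_abs_sum_bounded eta Cst N Hne HN HC Hg).
  assert (Hs0 : (0 <= s)%R)
    by (eapply Rle_trans; [apply (inv_abs_sum_ge0 eta Hne 0) | apply Hs]).
  split.
  - apply open_outside_discs, (centres_unbounded eta c Cst Rad N HC Hg Hec).
  - apply (A_1_inv_of_lower_bound Om P (2 / Cst + 2 / (Rad / 2) + 2 * s)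
             (exp (INR N ^ 2) / (Rad / 2) ^ m)).
    + assert (0 < 2 / Cst)%R by (apply Rdiv_lt_0_compat; lra).
      assert (0 < 2 / (Rad / 2))%R by (apply Rdiv_lt_0_compat; lra). lra.
    + apply Rdiv_lt_0_compat; [apply exp_pos | apply pow_lt; lra].
    + intros z _. exact (ex_derive_infinite_product eta Hne s m P Hs HP z).
    + intros z Hz.
      assert (Hz0 : (Rad / 2 <= Cmod z)%R).
      { specialize (Hz 0%nat). rewrite Hc0 in Hz. replace (z - 0) with z in Hz by ring. lra. }
      assert (Hdist : forall n, (1 <= n)%nat -> (Rad / 2 <= Cmod (eta n - z))%R)
        by (intros n Hn; exact (half_radius_le_dist (eta n) (c n) z Rad (Hz n) (Hec n Hn))).
      apply (Cmod_infinite_product_ge eta Cst N z (Rad / 2) Hne HN HC Hg); [lra | auto ..].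
Qed.
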